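(* For every $\alpha\in c_0(\mathbb{Z}_{\ge0})$ there exists a unique derivation $d_\alpha:\mathcal{A}\to A$ such that $d_\alpha(U)=U\alpha(\mathbb{K})$, $d_\alpha(U^* )=-\alpha(\mathbb{K})U^*$, and $d_\alpha(a)=0$ for every $a\in\mathcal{A}_0$. Moreover $d_\alpha$ is approximately inner and invariant.
   Context: Setup: $G$ is an infinite compact (Hausdorff) abelian group, written additively, and $x_1\in G$ generates a dense cyclic subgroup; $x_n=nx_1$. $\widehat G$ is the group of continuous characters and $\mathcal F$ their linear span. Let $H_+=\ell^2(\mathbb{Z}_{\ge 0})$ with canonical basis $\{E_k^+\}$; $UE_k^+=E_{k+1}^+$, $M^+_fE^+_k=f(x_k)E^+_k$, $\mathbb{K}E_k^+=kE_k^+$, and for a bounded sequence $\alpha$, $\alpha(\mathbb{K})E_k^+=\alpha(k)E_k^+$. $A=C^*(U,M^+_f:f\in C(G))$, $\mathcal{A}$ is the $*$-subalgebra generated by $U,U^*,M^+_\chi$ ($\chi\in\widehat G$), and $\mathcal{A}_0=\{a(\mathbb{K})+M^+_f: a\in c_{00}(\mathbb{Z}_{\ge0}), f\in\mathcal F\}$ is the set of diagonal elements of $\mathcal A$ ($c_{00}$ = eventually zero sequences). For $\theta\in\mathbb{R}$ let $\rho_\theta(a)=e^{i\theta\mathbb{K}}ae^{-i\theta\mathbb{K}}$. A derivation $d$ (linear, Leibniz) is invariant if $\rho_\theta^{-1}(d(\rho_\theta(a)))=d(a)$ for all $\theta,a$, and approximately inner if $d(a)=\lim_j[x_j,a]$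 in norm for some $x_j\in A$ and all $a\in\mathcal{A}$. *)

(* All operator-algebra notions are built
   concretely here: complex numbers as pairs of reals, bounded operators on
   H_+ = l^2(Z_{>=0}) via their matrices w.r.t. the canonical basis E_k^+,
   and compact abelian groups as an explicit structure. *)
From Stdlib Require Import Reals ClassicalEpsilon ZArith List.
Open Scope R_scope.

Definition Cplx := (R * R)%type.
Definition C0 : Cplx := (0, 0).
Definition C1 : Cplx := (1, 0).
Definition RtoC (r : R) : Cplx := (r, 0).
Definition Cplus (a b : Cplx) : Cplx := (fst a + fst b, snd a + snd b).
Definition Copp (a : Cplx) : Cplx := (- fst a, - snd a).
Definition Cminus (a b : Cplx) : Cplx := Cplus a (Copp b).
Definition Cmult (a b : Cplx) : Cplx :=
  (fst a * fst b - snd a * snd b, fst a * snd b + snd a * fst b).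
Definition Cconj (a : Cplx) : Cplx := (fst a, - snd a).
Definition Cnorm2 (a : Cplx) : R := fst a * fst a + snd a * snd a.
Definition Cabs (a : Cplx) : R := sqrt (Cnorm2 a).
Definition Cexpi (t : R) : Cplx := (cos t, sin t).

Fixpoint Cfsum (f : nat -> Cplx) (n : nat) : Cplx :=
  match n with
  | O => f O
  | S m => Cplus (Cfsum f m) (f (S m))
  end.

(* sum of a convergent real series (unspecified if divergent) *)
Definition Rseries (u : nat -> R) : R :=
  epsilon (inhabits 0) (fun l => infinite_sum u l).
Definition Cseries (s : nat -> Cplx) : Cplx :=
  (Rseries (fun n => fst (s n)), Rseries (fun n => snd (s n))).

(* T i j = < E_i^+ , T E_j^+ > *)
Definition Mat := nat -> nat -> Cplx.

Definition mzero : Mat := fun _ _ => C0.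
Definition madd (S T : Mat) : Mat := fun i j => Cplus (S i j) (T i j).
Definition mopp (T : Mat) : Mat := fun i j => Copp (T i j).
Definition msub (S T : Mat) : Mat := madd S (mopp T).
Definition mscal (c : Cplx) (T : Mat) : Mat := fun i j => Cmult c (T i j).
(* operator product (the series converge absolutely for bounded operators) *)
Definition mmul (S T : Mat) : Mat :=
  fun i k => Cseries (fun j => Cmult (S i j) (T j k)).
Definition madj (T : Mat) : Mat := fun i j => Cconj (T j i).
Definition mcomm (x a : Mat) : Mat := msub (mmul x a) (mmul a x).

(* ||T|| <= e  (tested on the finite sections, which characterises the
   operator norm of a matrix) *)
Definition normle (T : Mat) (e : R) : Prop :=
  0 <= e /\
  forall (n : nat) (v : nat -> Cplx),
    sum_f_R0 (fun i => Cnorm2 (Cfsum (fun j => Cmult (T i j) (v j)) n)) n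
    <= e * e * sum_f_R0 (fun j => Cnorm2 (v j)) n.

Definition bounded (T : Mat) : Prop := exists e, normle T e.

Definition mconv (T : nat -> Mat) (L : Mat) : Prop :=
  forall eps, 0 < eps -> exists N, forall n, (N <= n)%nat -> normle (msub (T n) L) eps.

(* diagonal operator  a(K) E_k = a(k) E_k *)
Definition diag (a : nat -> Cplx) : Mat :=
  fun i j => if Nat.eqb i j then a i else C0.
Definition Ushift : Mat := fun i j => if Nat.eqb i (S j) then C1 else C0.

Inductive star_alg (Gen : Mat -> Prop) : Mat -> Prop :=
  | sa_gen : forall T, Gen T -> star_alg Gen T
  | sa_add : forall S T, star_alg Gen S -> star_alg Gen T -> star_alg Gen (madd S T)
  | sa_scal : forall c T, star_alg Gen T -> star_alg Gen (mscal c T)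
  | sa_mul : forall S T, star_alg Gen S -> star_alg Gen T -> star_alg Gen (mmul S T)
  | sa_adj : forall T, star_alg Gen T -> star_alg Gen (madj T).

Definition cstar_alg (Gen : Mat -> Prop) (T : Mat) : Prop :=
  bounded T /\
  forall eps, 0 < eps -> exists a, star_alg Gen a /\ normle (msub T a) eps.

Definition c0seq (a : nat -> Cplx) : Prop :=
  forall eps, 0 < eps -> exists N, forall k, (N <= k)%nat -> Cabs (a k) < eps.
Definition c00seq (a : nat -> Cplx) : Prop :=
  exists N, forall k, (N <= k)%nat -> a k = C0.

Record TopAbGroup := {
  carrier :> Type;
  gadd : carrier -> carrier -> carrier;
  gopp : carrier -> carrier;
  gzero : carrier;
  gaddA : forall x y z, gadd x (gadd y z) = gadd (gadd x y) z;
  gaddC : forall x y, gadd x y = gadd y x;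
  gadd0 : forall x, gadd x gzero = x;
  gaddN : forall x, gadd x (gopp x) = gzero;
  gopen : (carrier -> Prop) -> Prop;
  open_full : gopen (fun _ => True);
  open_empty : gopen (fun _ => False);
  open_inter : forall U V, gopen U -> gopen V -> gopen (fun x => U x /\ V x);
  open_union : forall F : (carrier -> Prop) -> Prop,
      (forall U, F U -> gopen U) -> gopen (fun x => exists U, F U /\ U x);
  gadd_cont : forall x y W, gopen W -> W (gadd x y) ->
      exists U V, gopen U /\ gopen V /\ U x /\ V y /\
        forall u v, U u -> V v -> W (gadd u v);
  gopp_cont : forall W, gopen W -> gopen (fun x => W (gopp x))
}.

Arguments gadd {_}. Arguments gopp {_}. Arguments gzero {_}. Arguments gopen {_}.

Definition compact_group (G : TopAbGroup) : Prop :=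
  forall F : (G -> Prop) -> Prop,
    (forall U, F U -> gopen U) ->
    (forall x, exists U, F U /\ U x) ->
    exists l : list (G -> Prop), (forall U, In U l -> F U) /\
      (forall x, exists U, In U l /\ U x).

Definition hausdorff (G : TopAbGroup) : Prop :=
  forall x y : G, x <> y -> exists U V, gopen U /\ gopen V /\ U x /\ V y /\
    forall z, U z -> V z -> False.

Definition infinite_group (G : TopAbGroup) : Prop :=
  ~ exists l : list G, forall g, In g l.

Fixpoint natmul {G : TopAbGroup} (n : nat) (x : G) : G :=
  match n with O => gzero | S m => gadd (natmul m x) x end.
Definition zmul {G : TopAbGroup} (n : Z) (x : G) : G :=
  match n with
  | Z0 => gzero
  | Zpos p => natmul (Pos.to_nat p) x
  | Zneg p => gopp (natmul (Pos.to_nat p) x)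
  end.

Definition dense_cyclic {G : TopAbGroup} (x1 : G) : Prop :=
  forall U, gopen U -> (exists g, U g) -> exists n : Z, U (zmul n x1).

Definition continuous {G : TopAbGroup} (f : G -> Cplx) : Prop :=
  forall x eps, 0 < eps -> exists U, gopen U /\ U x /\
    forall y, U y -> Cabs (Cminus (f y) (f x)) < eps.

Definition character {G : TopAbGroup} (chi : G -> Cplx) : Prop :=
  continuous chi /\ (forall x, Cabs (chi x) = 1) /\
  (forall x y, chi (gadd x y) = Cmult (chi x) (chi y)).

Inductive char_span {G : TopAbGroup} : (G -> Cplx) -> Prop :=
  | cs_zero : char_span (fun _ => C0)
  | cs_char : forall chi, character chi -> char_span chi
  | cs_add : forall f g, char_span f -> char_span g ->
      char_span (fun x => Cplus (f x) (g x))
  | cs_scal : forall c f, char_span f -> char_span (fun x => Cmult c (f x)).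

Definition Mf {G : TopAbGroup} (x1 : G) (f : G -> Cplx) : Mat :=
  diag (fun k => f (natmul k x1)).

Definition Abig {G : TopAbGroup} (x1 : G) : Mat -> Prop :=
  cstar_alg (fun T => T = Ushift \/ exists f : G -> Cplx, continuous f /\ T = Mf x1 f).
Definition Acal {G : TopAbGroup} (x1 : G) : Mat -> Prop :=
  star_alg (fun T => T = Ushift \/ T = madj Ushift \/
                     exists chi : G -> Cplx, character chi /\ T = Mf x1 chi).
Definition A0 {G : TopAbGroup} (x1 : G) : Mat -> Prop :=
  fun T => exists (a : nat -> Cplx) (f : G -> Cplx),
    c00seq a /\ char_span f /\ T = madd (diag a) (Mf x1 f).

Definition is_derivation (dom cod : Mat -> Prop) (d : Mat -> Mat) : Prop :=
  (forall a, dom a -> cod (d a)) /\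
  (forall a b, dom a -> dom b -> d (madd a b) = madd (d a) (d b)) /\
  (forall c a, dom a -> d (mscal c a) = mscal c (d a)) /\
  (forall a b, dom a -> dom b -> d (mmul a b) = madd (mmul (d a) b) (mmul a (d b))).

Definition rho (theta : R) (a : Mat) : Mat :=
  mmul (mmul (diag (fun k => Cexpi (theta * INR k))) a)
       (diag (fun k => Cexpi (- (theta * INR k)))).

(* invariant: rho_theta^{-1}(d(rho_theta a)) = d a, with rho_theta^{-1} = rho_{-theta} *)
Definition invariant (dom : Mat -> Prop) (d : Mat -> Mat) : Prop :=
  forall theta a, dom a -> rho (- theta) (d (rho theta a)) = d a.

Definition approx_inner (dom Aalg : Mat -> Prop) (d : Mat -> Mat) : Prop :=
  exists x : nat -> Mat, (forall j, Aalg (x j)) /\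
    forall a, dom a -> mconv (fun j => mcomm (x j) a) (d a).

Definition dalpha_conds {G : TopAbGroup} (x1 : G) (alpha : nat -> Cplx) (d : Mat -> Mat) : Prop :=
  d Ushift = mmul Ushift (diag alpha) /\
  d (madj Ushift) = mopp (mmul (diag alpha) (madj Ushift)) /\
  (forall a, A0 x1 a -> d a = mzero).

(* Lemma 3.1.  With beta(k) = alpha(0) + ... + alpha(k-1), the derivation is
   d_alpha = [beta(K), .], the commutator with an unbounded diagonal, given on
   matrices by  d_alpha(T)_{ik} = (beta(i) - beta(k)) T_{ik}  (dcomm below). *)
From Pilot Require Import Defs.
From Stdlib Require Import Reals Lra Lia ClassicalEpsilon FunctionalExtensionality.
From Coquelicot Require Coquelicot.
Open Scope R_scope.

Ltac cring := apply injective_projections; simpl; ring.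

Lemma mat_ext (S T : Mat) : (forall i k, S i k = T i k) -> S = T.
Proof.
  intros H. apply functional_extensionality; intro i.
  apply functional_extensionality; intro k. apply H.
Qed.

Lemma Cabs_Cmod z : Cabs z = Coquelicot.Complex.Cmod z.
Proof. unfold Cabs, Cnorm2, Coquelicot.Complex.Cmod. f_equal. simpl; ring. Qed.

Lemma Cabs_ge0 z : 0 <= Cabs z.
Proof. apply sqrt_pos. Qed.

Lemma Cabs_triangle a b : Cabs (Cplus a b) <= Cabs a + Cabs b.
Proof. rewrite !Cabs_Cmod. exact (Coquelicot.Complex.Cmod_triangle a b). Qed.

Lemma Cabs_mult a b : Cabs (Cmult a b) = Cabs a * Cabs b.
Proof. rewrite !Cabs_Cmod. exact (Coquelicot.Complex.Cmod_mult a b). Qed.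

Lemma Cabs_opp a : Cabs (Copp a) = Cabs a.
Proof. unfold Cabs, Cnorm2, Copp; simpl. f_equal; ring. Qed.

Lemma Cabs_conj a : Cabs (Cconj a) = Cabs a.
Proof. unfold Cabs, Cnorm2, Cconj; simpl. f_equal; ring. Qed.

Lemma Cabs_C0 : Cabs C0 = 0.
Proof. unfold Cabs, Cnorm2, C0; simpl. replace (0*0+0*0) with 0 by ring. apply sqrt_0. Qed.

Lemma Cabs_C1 : Cabs Defs.C1 = 1.
Proof. unfold Cabs, Cnorm2, Defs.C1; simpl. replace (1*1+0*0) with 1 by ring. apply sqrt_1. Qed.

Lemma Cabs_minus_sym a b : Cabs (Cminus a b) = Cabs (Cminus b a).
Proof. unfold Cabs, Cnorm2, Cminus, Cplus, Copp; simpl. f_equal; ring. Qed.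

Lemma Cnorm2_Cabs z : Cnorm2 z = Cabs z * Cabs z.
Proof. unfold Cabs. rewrite sqrt_sqrt; [auto | unfold Cnorm2; nra]. Qed.

Lemma Cmult_0_l z : Cmult C0 z = C0. Proof. cring. Qed.
Lemma Cmult_0_r z : Cmult z C0 = C0. Proof. cring. Qed.

Lemma Cexpi_inv t : Cmult (Cexpi (- t)) (Cexpi t) = Defs.C1.
Proof.
  unfold Cexpi, Cmult, Defs.C1. rewrite cos_neg, sin_neg.
  pose proof (sin2_cos2 t) as H. unfold Rsqr in H.
  apply injective_projections; simpl; nra.
Qed.

Lemma increments_lipschitz (g : nat -> Cplx) e :
  (forall k, Cabs (Cminus (g (S k)) (g k)) <= e) ->
  forall i k, Cabs (Cminus (g i) (g k)) <= INR ((i - k) + (k - i)) * e.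
Proof.
  intros H.
  assert (Hstep : forall k m, Cabs (Cminus (g (k + m)%nat) (g k)) <= INR m * e).
  { intros k m; induction m as [|m IH].
    - rewrite Nat.add_0_r. replace (Cminus (g k) (g k)) with C0 by cring.
      rewrite Cabs_C0; simpl; lra.
    - replace (Cminus (g (k + S m)%nat) (g k)) with
        (Cplus (Cminus (g (S (k + m))) (g (k + m)%nat)) (Cminus (g (k + m)%nat) (g k)))
        by (replace (k + S m)%nat with (S (k + m)) by lia; cring).
      eapply Rle_trans; [apply Cabs_triangle|]. rewrite S_INR.
      specialize (H (k + m)%nat). lra. }
  intros i k. destruct (Nat.le_ge_cases k i).
  - replace i with (k + (i - k))%nat at 1 by lia.
    replace ((i - k) + (k - i))%nat with (i - k)%nat by lia. apply Hstep.
  - rewrite Cabs_minus_sym. replace k with (i + (k - i))%nat at 1 by lia.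
    replace ((i - k) + (k - i))%nat with (k - i)%nat by lia. apply Hstep.
Qed.

Lemma Cfsum_ext f g n :
  (forall j, (j <= n)%nat -> f j = g j) -> Cfsum f n = Cfsum g n.
Proof.
  induction n; simpl; intros H; [apply H; lia|].
  rewrite IHn by (intros; apply H; lia). rewrite H by lia. auto.
Qed.

Lemma Cfsum_plus f g n :
  Cfsum (fun j => Cplus (f j) (g j)) n = Cplus (Cfsum f n) (Cfsum g n).
Proof. induction n; simpl; auto. rewrite IHn. cring. Qed.

Lemma Cfsum_scal c f n : Cfsum (fun j => Cmult c (f j)) n = Cmult c (Cfsum f n).
Proof. induction n; simpl; auto. rewrite IHn. cring. Qed.

Lemma Cfsum_opp f n : Cfsum (fun j => Copp (f j)) n = Copp (Cfsum f n).
Proof. induction n; simpl; auto. rewrite IHn. cring. Qed.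

Lemma Cfsum_conj f n : Cfsum (fun j => Cconj (f j)) n = Cconj (Cfsum f n).
Proof. induction n; simpl; auto. rewrite IHn. cring. Qed.

Lemma Cfsum_fst f n : fst (Cfsum f n) = sum_f_R0 (fun j => fst (f j)) n.
Proof. induction n; simpl; auto. rewrite IHn; auto. Qed.

Lemma Cfsum_snd f n : snd (Cfsum f n) = sum_f_R0 (fun j => snd (f j)) n.
Proof. induction n; simpl; auto. rewrite IHn; auto. Qed.

Lemma Cfsum_abs f n : Cabs (Cfsum f n) <= sum_f_R0 (fun j => Cabs (f j)) n.
Proof. induction n; simpl; [lra|]. eapply Rle_trans; [apply Cabs_triangle | lra]. Qed.

Lemma Cfsum_zero f n : (forall j, (j <= n)%nat -> f j = C0) -> Cfsum f n = C0.
Proof.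
  intros H; induction n; simpl; [apply H; lia|].
  rewrite IHn by (intros; apply H; lia). rewrite (H (S n)) by lia. cring.
Qed.

Lemma Cfsum_single f j0 n :
  (forall j, j <> j0 -> f j = C0) -> (j0 <= n)%nat -> Cfsum f n = f j0.
Proof.
  intros H. induction n; intros Hn; simpl.
  - replace j0 with 0%nat by lia; auto.
  - destruct (Nat.eq_dec j0 (S n)) as [e|e].
    + subst. rewrite Cfsum_zero by (intros j Hj; apply H; lia). cring.
    + rewrite IHn, (H (S n)) by lia. cring.
Qed.

Lemma Rseries_finite u M :
  (forall j, (M < j)%nat -> u j = 0) -> Rseries u = sum_f_R0 u M.
Proof.
  intros H.
  assert (Htail : forall k, sum_f_R0 u (M + k) = sum_f_R0 u M).
  { induction k as [|k IH]; [rewrite Nat.add_0_r; auto|].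
    replace (M + S k)%nat with (S (M + k)) by lia. simpl. rewrite IH, H by lia. ring. }
  assert (Hs : infinite_sum u (sum_f_R0 u M)).
  { intros eps He. exists M. intros n Hn. unfold Rdist.
    replace n with (M + (n - M))%nat by lia. rewrite Htail, Rminus_diag, Rabs_R0; auto. }
  unfold Rseries. apply (uniqueness_sum u); [|exact Hs]. apply epsilon_spec. eauto.
Qed.

Lemma Cseries_finite f M :
  (forall j, (M < j)%nat -> f j = C0) -> Cseries f = Cfsum f M.
Proof.
  intros H. unfold Cseries. rewrite (Rseries_finite _ M), (Rseries_finite _ M).
  - apply injective_projections; simpl; symmetry; [apply Cfsum_fst | apply Cfsum_snd].
  - intros j Hj; rewrite H; auto.
  - intros j Hj; rewrite H; auto.
Qed.

Lemma Cseries_single f j0 : (forall j, j <> j0 -> f j = C0) -> Cseries f = f j0.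
Proof.
  intros H. rewrite (Cseries_finite f j0) by (intros; apply H; lia).
  apply Cfsum_single; auto.
Qed.

(* Products with diagonal matrices and with the shift are exact for every
   matrix, since only one term of the defining series survives. *)
Lemma mmul_diag_l g T : mmul (diag g) T = fun i k => Cmult (g i) (T i k).
Proof.
  apply mat_ext; intros i k. unfold mmul, diag.
  rewrite (Cseries_single _ i), Nat.eqb_refl; auto.
  intros j Hj. destruct (Nat.eqb_spec i j); [lia | apply Cmult_0_l].
Qed.

Lemma mmul_diag_r T g : mmul T (diag g) = fun i k => Cmult (T i k) (g k).
Proof.
  apply mat_ext; intros i k. unfold mmul, diag.
  rewrite (Cseries_single _ k), Nat.eqb_refl; auto.
  intros j Hj. destruct (Nat.eqb_spec j k); [lia | apply Cmult_0_r].
Qed.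

Lemma mmul_U_l T : mmul Ushift T = fun i k => match i with O => C0 | S i' => T i' k end.
Proof.
  apply mat_ext; intros i k. unfold mmul, Ushift. destruct i as [|i'].
  - rewrite (Cseries_single _ 0); [apply Cmult_0_l|]. intros j _. apply Cmult_0_l.
  - rewrite (Cseries_single _ i'), Nat.eqb_refl; [cring|].
    intros j Hj. destruct (Nat.eqb_spec (S i') (S j)); [lia | apply Cmult_0_l].
Qed.

Lemma mmul_Uadj_r T : mmul T (madj Ushift) = fun i k => match k with O => C0 | S k' => T i k' end.
Proof.
  apply mat_ext; intros i k. unfold mmul, madj, Ushift. destruct k as [|k'].
  - rewrite (Cseries_single _ 0); [cring|]. intros j _. cring.
  - rewrite (Cseries_single _ k'), Nat.eqb_refl; [cring|].
    intros j Hj. destruct (Nat.eqb_spec (S k') (S j)); [lia | cring].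
Qed.

Definition banded (N : nat) (T : Mat) : Prop :=
  forall i j, (j + N < i \/ i + N < j)%nat -> T i j = C0.
Definition entry_bounded (M : R) (T : Mat) : Prop := forall i j, Cabs (T i j) <= M.

Lemma entry_bounded_ge0 M T : entry_bounded M T -> 0 <= M.
Proof. intros H. eapply Rle_trans; [apply Cabs_ge0 | apply (H 0%nat 0%nat)]. Qed.

Lemma mmul_banded S T N i k : banded N S ->
  mmul S T i k = Cfsum (fun j => Cmult (S i j) (T j k)) (i + N).
Proof.
  intros HS. apply Cseries_finite. intros j Hj. rewrite HS by lia. apply Cmult_0_l.
Qed.

Lemma banded_mmul N1 N2 S T : banded N1 S -> banded N2 T -> banded (N1 + N2) (mmul S T).
Proof.
  intros HS HT i k Hik. rewrite (mmul_banded S T N1) by auto. apply Cfsum_zero. intros j _.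
  destruct (Nat.lt_ge_cases (j + N1) i); [rewrite HS by lia; apply Cmult_0_l|].
  destruct (Nat.lt_ge_cases (i + N1) j); [rewrite HS by lia; apply Cmult_0_l|].
  rewrite HT by lia. apply Cmult_0_r.
Qed.

Lemma madj_mmul N S T : banded N S -> madj (mmul S T) = mmul (madj T) (madj S).
Proof.
  intros HS. apply mat_ext; intros i k.
  unfold madj at 1. rewrite (mmul_banded S T N) by auto. unfold mmul.
  rewrite (Cseries_finite _ (k + N)).
  - rewrite <- Cfsum_conj. apply Cfsum_ext. intros j _. unfold madj. cring.
  - intros j Hj. unfold madj. rewrite (HS k j) by lia. cring.
Qed.

Lemma madj_madj T : madj (madj T) = T.
Proof. apply mat_ext; intros i k. unfold madj. cring. Qed.

Lemma window_count a b n :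
  sum_f_R0 (fun j => if andb (a <=? j)%nat (j <=? b)%nat then 1 else 0) n
  = INR (S (Nat.min n b) - a).
Proof.
  induction n as [|n IHn]; [simpl; destruct a; simpl; auto|].
  rewrite tech5, IHn.
  destruct (Nat.leb_spec a (S n)), (Nat.leb_spec (S n) b); cbn [andb].
  - replace (S (Nat.min (S n) b) - a)%nat with ((S (Nat.min n b) - a) + 1)%nat by lia.
    rewrite plus_INR; simpl; ring.
  - replace (S (Nat.min (S n) b) - a)%nat with (S (Nat.min n b) - a)%nat by lia. ring.
  - replace (S (Nat.min (S n) b) - a)%nat with (S (Nat.min n b) - a)%nat by lia. ring.
  - replace (S (Nat.min (S n) b) - a)%nat with (S (Nat.min n b) - a)%nat by lia. ring.
Qed.

Lemma banded_row_sum (g : nat -> R) c N M n :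
  (forall j, 0 <= g j <= M) -> (forall j, (j + N < c \/ c + N < j)%nat -> g j = 0) ->
  sum_f_R0 g n <= INR (2 * N + 1) * M.
Proof.
  intros Hg Hz. assert (HM : 0 <= M) by (destruct (Hg 0%nat); lra).
  apply Rle_trans with
    (sum_f_R0 (fun j => (if andb ((c - N) <=? j)%nat (j <=? c + N)%nat then 1 else 0) * M) n).
  - apply sum_Rle. intros j _.
    destruct (Nat.leb_spec (c - N) j), (Nat.leb_spec j (c + N)); simpl;
      try (destruct (Hg j); lra); rewrite Hz by lia; lra.
  - rewrite <- scal_sum, window_count, Rmult_comm.
    apply Rmult_le_compat_r; auto. apply le_INR. lia.
Qed.

Lemma entry_bounded_mmul N1 M1 M2 S T :
  banded N1 S -> entry_bounded M1 S -> entry_bounded M2 T ->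
  entry_bounded (INR (2 * N1 + 1) * (M1 * M2)) (mmul S T).
Proof.
  intros HS H1 H2 i k. rewrite (mmul_banded S T N1) by auto.
  eapply Rle_trans; [apply Cfsum_abs|]. apply (banded_row_sum _ i N1).
  - intros j. rewrite Cabs_mult. split; [apply Rmult_le_pos; apply Cabs_ge0|].
    apply Rmult_le_compat; try apply Cabs_ge0; auto.
  - intros j Hj. rewrite HS by lia. rewrite Cmult_0_l, Cabs_C0. auto.
Qed.

Lemma weighted_cauchy_schwarz (w x : nat -> R) n : (forall j, 0 <= w j) ->
  (sum_f_R0 (fun j => w j * x j) n)^2 <=
  sum_f_R0 w n * sum_f_R0 (fun j => w j * x j * x j) n.
Proof.
  intros Hw. induction n; simpl; [nra|].
  set (A := sum_f_R0 w n) in *. set (B := sum_f_R0 (fun j => w j * x j) n) in *.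
  set (C := sum_f_R0 (fun j => w j * x j * x j) n) in *. simpl in IHn.
  assert (HA : 0 <= A) by (apply cond_pos_sum; auto).
  assert (HC : 0 <= C) by (apply cond_pos_sum; intros j; specialize (Hw j); nra).
  set (y := x (S n)).
  (* the cross term is controlled by the discriminant of t |-> A t^2 - 2 B t + C *)
  assert (Hq : 0 <= A * y * y - 2 * B * y + C).
  { destruct (Rle_lt_dec A 0).
    - assert (HA0 : A = 0) by lra. rewrite HA0 in IHn.
      assert (HB : B = 0) by nra. rewrite HA0, HB. lra.
    - assert (Hsq : 0 <= (A*y - B) * (A*y - B)) by apply Rle_0_sqr.
      assert (HAC : B * B <= A * C) by (simpl in IHn; lra).
      apply Rmult_le_reg_l with A; [lra|].
      replace (A * (A * y * y - 2 * B * y + C)) with ((A*y - B)*(A*y - B) + (A*C - B*B))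
        by ring. lra. }
  specialize (Hw (S n)). nra.
Qed.

Lemma sum_exchange (a : nat -> nat -> R) m n :
  sum_f_R0 (fun i => sum_f_R0 (fun j => a i j) n) m
  = sum_f_R0 (fun j => sum_f_R0 (fun i => a i j) m) n.
Proof.
  induction m; simpl; [apply sum_eq; auto|].
  rewrite IHm, <- plus_sum. apply sum_eq; auto.
Qed.

Lemma sum_scal_l c f n : sum_f_R0 (fun i => c * f i) n = c * sum_f_R0 f n.
Proof. rewrite scal_sum. apply sum_eq; intros; ring. Qed.

Lemma normle_mono T e e' : normle T e -> e <= e' -> normle T e'.
Proof.
  intros [He H] Hle. split; [lra|]. intros n v. eapply Rle_trans; [apply H|].
  apply Rmult_le_compat_r; [apply cond_pos_sum; intros; unfold Cnorm2; nra|].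
  apply Rmult_le_compat; lra.
Qed.

Lemma normle_msub_sym P Q e : normle (msub P Q) e -> normle (msub Q P) e.
Proof.
  intros [He H]. split; auto. intros n v. eapply Rle_trans; [|apply (H n v)]. right.
  apply sum_eq. intros i _.
  replace (Cfsum (fun j => Cmult (msub Q P i j) (v j)) n)
    with (Copp (Cfsum (fun j => Cmult (msub P Q i j) (v j)) n)).
  - unfold Cnorm2, Copp; simpl; ring.
  - rewrite <- Cfsum_opp. apply Cfsum_ext. intros; unfold msub, madd, mopp. cring.
Qed.

(* Schur test: a banded matrix with entries bounded by M has norm at most
   (2N+1) M, since its row and column sums of moduli are at most (2N+1) M. *)
Lemma banded_normle N M T : banded N T -> entry_bounded M T -> normle T (INR (2 * N + 1) * M).
Proof.
  intros Hb He. assert (HM := entry_bounded_ge0 M T He).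
  set (K := INR (2 * N + 1) * M).
  assert (HK : 0 <= K) by (apply Rmult_le_pos; auto; apply pos_INR).
  split; auto. intros n v.
  set (a := fun i j => Cabs (T i j)). set (w := fun j => Cnorm2 (v j)).
  assert (Ha : forall i j, 0 <= a i j <= M) by (intros; split; [apply Cabs_ge0 | apply He]).
  assert (Haz : forall i j, (j + N < i \/ i + N < j)%nat -> a i j = 0)
    by (intros; unfold a; rewrite Hb by auto; apply Cabs_C0).
  assert (Hw : forall j, 0 <= w j) by (intros; unfold w, Cnorm2; nra).
  assert (Hrow : forall i, sum_f_R0 (fun j => a i j) n <= K)
    by (intros i; apply (banded_row_sum _ i N); auto).
  assert (Hcol : forall j, sum_f_R0 (fun i => a i j) n <= K).
  { intros j. apply (banded_row_sum _ j N); auto. intros i Hi. apply Haz; lia. }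
  (* each row: |(Tv)_i|^2 <= (sum_j a_ij) (sum_j a_ij |v_j|^2) by Cauchy-Schwarz *)
  assert (Hrow_cs : forall i, Cnorm2 (Cfsum (fun j => Cmult (T i j) (v j)) n)
                              <= K * sum_f_R0 (fun j => a i j * w j) n).
  { intros i.
    assert (H1 : Cabs (Cfsum (fun j => Cmult (T i j) (v j)) n)
                 <= sum_f_R0 (fun j => a i j * Cabs (v j)) n).
    { eapply Rle_trans; [apply Cfsum_abs|]. apply sum_Rle; intros.
      rewrite Cabs_mult. apply Rle_refl. }
    assert (H2 := weighted_cauchy_schwarz (fun j => a i j) (fun j => Cabs (v j)) n
                    (fun j => proj1 (Ha i j))).
    simpl in H2.
    rewrite (sum_eq (fun j => a i j * Cabs (v j) * Cabs (v j)) (fun j => a i j * w j))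
      in H2 by (intros; unfold w; rewrite Cnorm2_Cabs; ring).
    assert (H4 : 0 <= sum_f_R0 (fun j => a i j * w j) n)
      by (apply cond_pos_sum; intros j; specialize (Ha i j); specialize (Hw j); nra).
    rewrite Cnorm2_Cabs.
    pose proof (Cabs_ge0 (Cfsum (fun j => Cmult (T i j) (v j)) n)).
    pose proof (Hrow i). nra. }
  apply Rle_trans with (sum_f_R0 (fun i => K * sum_f_R0 (fun j => a i j * w j) n) n);
    [apply sum_Rle; auto|].
  rewrite sum_scal_l, sum_exchange.
  apply Rle_trans with (K * sum_f_R0 (fun j => w j * K) n).
  - apply Rmult_le_compat_l; auto. apply sum_Rle. intros j _.
    rewrite (sum_eq _ (fun i => w j * a i j)) by (intros; ring).
    rewrite sum_scal_l. apply Rmult_le_compat_l; auto.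
  - rewrite <- scal_sum. right. unfold w. ring.
Qed.

Lemma banded_diag g : banded 0 (diag g).
Proof. intros i j H. unfold diag. destruct (Nat.eqb_spec i j); [lia | auto]. Qed.

Lemma entry_bounded_diag g M : 0 <= M -> (forall k, Cabs (g k) <= M) -> entry_bounded M (diag g).
Proof. intros HM H i j. unfold diag. destruct (Nat.eqb i j); auto. rewrite Cabs_C0; auto. Qed.

Lemma banded_U : banded 1 Ushift.
Proof. intros i j H. unfold Ushift. destruct (Nat.eqb_spec i (S j)); [lia | auto]. Qed.

Lemma entry_bounded_U : entry_bounded 1 Ushift.
Proof.
  intros i j. unfold Ushift. destruct (Nat.eqb i (S j));
    [rewrite Cabs_C1 | rewrite Cabs_C0]; lra.
Qed.

Lemma banded_adj N T : banded N T -> banded N (madj T).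
Proof. intros H i j Hij. unfold madj. rewrite H by lia. cring. Qed.

Lemma entry_bounded_adj M T : entry_bounded M T -> entry_bounded M (madj T).
Proof. intros H i j. unfold madj. rewrite Cabs_conj. auto. Qed.

Lemma Acal_banded {G : TopAbGroup} (x1 : G) T :
  Acal x1 T -> exists N M, banded N T /\ entry_bounded M T.
Proof.
  induction 1 as [T HT
                 | S T _ [N1 [M1 [B1 E1]]] _ [N2 [M2 [B2 E2]]]
                 | c T _ [N1 [M1 [B1 E1]]]
                 | S T _ [N1 [M1 [B1 E1]]] _ [N2 [M2 [B2 E2]]]
                 | T _ [N1 [M1 [B1 E1]]]].
  - destruct HT as [->|[->|[chi [[_ [Hchi _]] ->]]]].
    + exists 1%nat, 1. split; [apply banded_U | apply entry_bounded_U].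
    + exists 1%nat, 1. split; [apply banded_adj, banded_U | apply entry_bounded_adj, entry_bounded_U].
    + exists 0%nat, 1. split; [apply banded_diag|].
      apply entry_bounded_diag; [lra|]. intros k; rewrite Hchi; lra.
  - exists (Nat.max N1 N2), (M1 + M2). split.
    + intros i j H. unfold madd. rewrite B1, B2 by lia. cring.
    + intros i j. unfold madd. eapply Rle_trans; [apply Cabs_triangle|].
      specialize (E1 i j); specialize (E2 i j); lra.
  - exists N1, (Cabs c * M1). split.
    + intros i j H. unfold mscal. rewrite B1 by lia. cring.
    + intros i j. unfold mscal. rewrite Cabs_mult.
      apply Rmult_le_compat_l; [apply Cabs_ge0 | auto].
  - exists (N1 + N2)%nat, (INR (2 * N1 + 1) * (M1 * M2)).
    split; [apply banded_mmul | apply entry_bounded_mmul]; auto.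
  - exists N1, M1. split; [apply banded_adj | apply entry_bounded_adj]; auto.
Qed.

(* The diagonal commutator with a (possibly unbounded) diagonal b(K). *)
Definition dcomm (b : nat -> Cplx) (T : Mat) : Mat :=
  fun i k => Cmult (Cminus (b i) (b k)) (T i k).

Lemma mcomm_diag b T : mcomm (diag b) T = dcomm b T.
Proof.
  unfold mcomm. rewrite mmul_diag_l, mmul_diag_r.
  apply mat_ext; intros i k. unfold msub, madd, mopp, dcomm. cring.
Qed.

Lemma dcomm_add b S T : dcomm b (madd S T) = madd (dcomm b S) (dcomm b T).
Proof. apply mat_ext; intros i k. unfold dcomm, madd. cring. Qed.

Lemma dcomm_scal b c T : dcomm b (mscal c T) = mscal c (dcomm b T).
Proof. apply mat_ext; intros i k. unfold dcomm, mscal. cring. Qed.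

Lemma dcomm_sub b b' T :
  msub (dcomm b T) (dcomm b' T) = dcomm (fun k => Cminus (b k) (b' k)) T.
Proof. apply mat_ext; intros i k. unfold dcomm, msub, madd, mopp. cring. Qed.

Lemma dcomm_leibniz b N S T : banded N S ->
  dcomm b (mmul S T) = madd (mmul (dcomm b S) T) (mmul S (dcomm b T)).
Proof.
  intros HS. assert (HdS : banded N (dcomm b S)).
  { intros i j Hij. unfold dcomm. rewrite HS by auto. apply Cmult_0_r. }
  apply mat_ext; intros i k. unfold madd at 1. unfold dcomm at 1.
  rewrite (mmul_banded S T N), (mmul_banded _ T N), (mmul_banded S _ N) by auto.
  rewrite <- Cfsum_scal, <- Cfsum_plus. apply Cfsum_ext. intros j _. unfold dcomm. cring.
Qed.

Lemma dcomm_on_diagonal b T : (forall i k, i <> k -> T i k = C0) -> dcomm b T = mzero.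
Proof.
  intros HT. apply mat_ext; intros i k. unfold dcomm, mzero.
  destruct (Nat.eq_dec i k) as [->|Hik]; [cring | rewrite HT by auto; cring].
Qed.

(* rho_theta conjugates by a diagonal unitary, which commutes with b(K). *)
Lemma dcomm_invariant b dom : invariant dom (dcomm b).
Proof.
  intros theta a _. unfold rho. rewrite !mmul_diag_l, !mmul_diag_r.
  apply mat_ext; intros i k. unfold dcomm.
  replace (- theta * INR i) with (- (theta * INR i)) by ring.
  replace (- (- theta * INR k)) with (theta * INR k) by ring.
  pose proof (Cexpi_inv (theta * INR i)) as H1. pose proof (Cexpi_inv (theta * INR k)) as H2.
  set (p := Cexpi (theta * INR i)) in *. set (p' := Cexpi (- (theta * INR i))) in *.
  set (q := Cexpi (theta * INR k)) in *. set (q' := Cexpi (- (theta * INR k))) in *.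
  set (z := Cmult (Cminus (b i) (b k)) (a i k)).
  transitivity (Cmult (Cmult p' p) (Cmult (Cmult q' q) z)); [unfold z; cring|].
  rewrite H1, H2. unfold z. cring.
Qed.

(* If b has increments at most e, then on a banded T the factor b(i) - b(k)
   is at most N e, so the Schur test bounds the norm of dcomm b T. *)
Lemma dcomm_normle b e N M T :
  (forall k, Cabs (Cminus (b (S k)) (b k)) <= e) -> banded N T -> entry_bounded M T ->
  normle (dcomm b T) (INR (2 * N + 1) * (INR N * e * M)).
Proof.
  intros Hb HN HM. apply banded_normle.
  - intros i k H. unfold dcomm. rewrite HN by auto. apply Cmult_0_r.
  - assert (He : 0 <= e) by (eapply Rle_trans; [apply Cabs_ge0 | apply (Hb 0%nat)]).
    assert (HM0 := entry_bounded_ge0 M T HM).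
    intros i k. unfold dcomm. rewrite Cabs_mult.
    destruct (Nat.lt_ge_cases (k + N) i) as [Hfar|Hki];
      [|destruct (Nat.lt_ge_cases (i + N) k) as [Hfar|Hik]].
    1,2: rewrite HN, Cabs_C0, Rmult_0_r by lia;
         apply Rmult_le_pos; [apply Rmult_le_pos; [apply pos_INR | lra] | auto].
    apply Rmult_le_compat; try apply Cabs_ge0; auto.
    eapply Rle_trans; [apply (increments_lipschitz b e Hb)|].
    apply Rmult_le_compat_r; [lra | apply le_INR; lia].
Qed.

Fixpoint psum (alpha : nat -> Cplx) (k : nat) : Cplx :=
  match k with O => C0 | S k' => Cplus (psum alpha k') (alpha k') end.

Definition dalpha (alpha : nat -> Cplx) : Mat -> Mat := dcomm (psum alpha).

Lemma psum_incr alpha k : Cminus (psum alpha (S k)) (psum alpha k) = alpha k.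
Proof. simpl. cring. Qed.

Lemma dalpha_conditions {G : TopAbGroup} (x1 : G) alpha : dalpha_conds x1 alpha (dalpha alpha).
Proof.
  split; [|split].
  - rewrite mmul_diag_r. apply mat_ext; intros i k.
    unfold dalpha, dcomm, Ushift. destruct (Nat.eqb_spec i (S k)); [subst; simpl; cring | cring].
  - rewrite mmul_diag_l. apply mat_ext; intros i k.
    unfold dalpha, dcomm, mopp, madj, Ushift.
    destruct (Nat.eqb_spec k (S i)); [subst; simpl; cring | cring].
  - intros a [s [f [_ [_ ->]]]]. apply dcomm_on_diagonal. intros i k Hik.
    unfold madd, Mf, diag. destruct (Nat.eqb_spec i k); [lia | cring].
Qed.

Lemma term_le_sum (f : nat -> R) k n :
  (forall j, 0 <= f j) -> (k <= n)%nat -> f k <= sum_f_R0 f n.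
Proof.
  intros H. induction n; intros Hk; simpl.
  - replace k with 0%nat by lia. lra.
  - destruct (Nat.eq_dec k (S n)) as [->|Hne].
    + pose proof (cond_pos_sum f n H). lra.
    + pose proof (IHn ltac:(lia)). specialize (H (S n)). lra.
Qed.

Lemma c0_bounded alpha : c0seq alpha -> exists A, 0 <= A /\ forall k, Cabs (alpha k) <= A.
Proof.
  intros H. destruct (H 1 ltac:(lra)) as [N HN].
  set (S := sum_f_R0 (fun l => Cabs (alpha l)) N).
  assert (HS : 0 <= S) by (apply cond_pos_sum; intros; apply Cabs_ge0).
  exists (1 + S). split; [lra|]. intros k. destruct (Nat.le_gt_cases N k) as [Hk|Hk].
  - specialize (HN k Hk). lra.
  - pose proof (term_le_sum (fun l => Cabs (alpha l)) k N (fun _ => Cabs_ge0 _)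
                  ltac:(lia)) as Hle. cbv beta in Hle. fold S in Hle. lra.
Qed.

Definition GenB {G : TopAbGroup} (x1 : G) : Mat -> Prop :=
  fun T => T = Ushift \/ exists f : G -> Cplx, Defs.continuous f /\ T = Mf x1 f.

Lemma zero_normle T eps : 0 < eps -> (forall i j, T i j = C0) -> normle T eps.
Proof.
  intros He H. apply normle_mono with (INR (2 * 0 + 1) * 0); [|lra].
  apply banded_normle; [intros i j _; auto | intros i j; rewrite H, Cabs_C0; lra].
Qed.

Lemma star_alg_in_Abig {G : TopAbGroup} (x1 : G) T :
  star_alg (GenB x1) T -> Defs.bounded T -> Abig x1 T.
Proof.
  intros HT Hb. split; [exact Hb|]. intros eps He. exists T. split; [exact HT|].
  apply zero_normle; auto. intros; unfold msub, madd, mopp; cring.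
Qed.

Lemma Acal_in_star_alg {G : TopAbGroup} (x1 : G) T : Acal x1 T -> star_alg (GenB x1) T.
Proof.
  induction 1 as [T HT | | | |].
  - destruct HT as [->|[->|[chi [[Hc _] ->]]]].
    + apply sa_gen. left; auto.
    + apply sa_adj, sa_gen. left; auto.
    + apply sa_gen. right. exists chi; auto.
  - apply sa_add; auto.
  - apply sa_scal; auto.
  - apply sa_mul; auto.
  - apply sa_adj; auto.
Qed.

Lemma mcomm_in_star_alg {G : TopAbGroup} (x1 : G) X a :
  star_alg (GenB x1) X -> star_alg (GenB x1) a -> star_alg (GenB x1) (mcomm X a).
Proof.
  intros HX Ha. unfold mcomm, msub.
  replace (mopp (mmul a X)) with (mscal (Copp Defs.C1) (mmul a X))
    by (apply mat_ext; intros i k; unfold mopp, mscal; cring).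
  apply sa_add; apply sa_mul || apply sa_scal, sa_mul; auto.
Qed.

(* The projection onto span{E_k : k >= m}: P_0 = M_1 and P_{m+1} = U P_m U^*. *)
Definition proj_from (m : nat) : Mat := diag (fun k => if (m <=? k)%nat then Defs.C1 else C0).

Lemma proj_from_in {G : TopAbGroup} (x1 : G) m : star_alg (GenB x1) (proj_from m).
Proof.
  induction m.
  - apply sa_gen. right. exists (fun _ => Defs.C1). split; [|reflexivity].
    intros x eps He. exists (fun _ => True). split; [apply open_full|]. split; auto.
    intros y _. replace (Cminus Defs.C1 Defs.C1) with C0 by cring. rewrite Cabs_C0; auto.
  - replace (proj_from (S m)) with (mmul Ushift (mmul (proj_from m) (madj Ushift))).
    + apply sa_mul; [apply sa_gen; left; auto|].
      apply sa_mul; [auto | apply sa_adj, sa_gen; left; auto].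
    + rewrite mmul_Uadj_r, mmul_U_l. apply mat_ext; intros i k.
      unfold proj_from, diag. destruct i, k; simpl; auto.
Qed.

(* The truncations X_j = beta(min(K, j)) = sum_{m<j} alpha(m) P_{m+1}. *)
Definition trunc (alpha : nat -> Cplx) (j : nat) : Mat :=
  diag (fun k => psum alpha (Nat.min k j)).

Lemma trunc_in {G : TopAbGroup} (x1 : G) alpha j : star_alg (GenB x1) (trunc alpha j).
Proof.
  induction j.
  - replace (trunc alpha 0) with (mscal C0 (proj_from 0)); [apply sa_scal, proj_from_in|].
    apply mat_ext; intros i k. unfold trunc, proj_from, mscal, diag.
    rewrite Nat.min_0_r. destruct (Nat.eqb i k); simpl; cring.
  - replace (trunc alpha (S j)) with (madd (trunc alpha j) (mscal (alpha j) (proj_from (S j)))).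
    + apply sa_add; [auto | apply sa_scal, proj_from_in].
    + apply mat_ext; intros i k. unfold trunc, proj_from, mscal, madd, diag.
      destruct (Nat.eqb_spec i k); [|cring]. subst.
      destruct (Nat.leb_spec (S j) k).
      * rewrite Nat.min_r, Nat.min_r by lia. simpl. cring.
      * rewrite !Nat.min_l by lia. cring.
Qed.

Lemma trunc_in_Abig {G : TopAbGroup} (x1 : G) alpha j : c0seq alpha -> Abig x1 (trunc alpha j).
Proof.
  intros Hc. destruct (c0_bounded alpha Hc) as [A [HA HAb]].
  apply star_alg_in_Abig; [apply trunc_in|].
  exists (INR (2 * 0 + 1) * (INR j * A)). apply banded_normle; [apply banded_diag|].
  apply entry_bounded_diag; [apply Rmult_le_pos; auto; apply pos_INR|].
  intros k. replace (psum alpha (Nat.min k j)) with (Cminus (psum alpha (Nat.min k j)) (psum alpha 0))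
    by (simpl; cring).
  eapply Rle_trans.
  - apply (increments_lipschitz (psum alpha) A); intros l; rewrite psum_incr; auto.
  - apply Rmult_le_compat_r; auto. apply le_INR; lia.
Qed.

(* Since alpha is c_0, the increments of X_j - beta(K), namely 0 below j and
   -alpha(k) above j, are uniformly small: [X_j, a] -> d_alpha(a) in norm. *)
Lemma commutators_converge alpha N M a : c0seq alpha -> banded N a -> entry_bounded M a ->
  mconv (fun j => mcomm (trunc alpha j) a) (dalpha alpha a).
Proof.
  intros Hc Hb He eps Heps. assert (HM := entry_bounded_ge0 M a He).
  set (K := INR (2 * N + 1) * INR N * M).
  assert (HK : 0 <= K) by (apply Rmult_le_pos; auto; apply Rmult_le_pos; apply pos_INR).
  set (ep := eps / (K + 1)).
  assert (Hep : 0 < ep) by (apply Rdiv_lt_0_compat; lra).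
  destruct (Hc ep Hep) as [J HJ]. exists J. intros j Hj.
  unfold trunc, dalpha. rewrite mcomm_diag, dcomm_sub.
  eapply normle_mono; [apply (dcomm_normle _ ep N M); auto|].
  - intros l. destruct (Nat.lt_ge_cases l j).
    + rewrite !Nat.min_l by lia.
      replace (Cminus _ _) with C0 by cring. rewrite Cabs_C0; lra.
    + rewrite !Nat.min_r by lia. simpl psum.
      replace (Cminus _ _) with (Copp (alpha l)) by cring.
      rewrite Cabs_opp. left. apply HJ. lia.
  - replace (INR (2 * N + 1) * (INR N * ep * M)) with (K * ep) by (unfold K; ring).
    unfold ep. apply Rle_trans with ((K + 1) * (eps / (K + 1))).
    + apply Rmult_le_compat_r; [left; auto | lra].
    + right. field. lra.
Qed.

Lemma dalpha_in_Abig {G : TopAbGroup} (x1 : G) alpha a :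
  c0seq alpha -> Acal x1 a -> Abig x1 (dalpha alpha a).
Proof.
  intros Hc Ha. destruct (Acal_banded x1 a Ha) as [N [M [Hb He]]].
  destruct (c0_bounded alpha Hc) as [A [HA HAb]]. split.
  - eexists. apply (dcomm_normle _ A N M); auto. intros k; rewrite psum_incr; auto.
  - intros eps Heps. destruct (commutators_converge alpha N M a Hc Hb He eps Heps) as [J HJ].
    exists (mcomm (trunc alpha J) a). split.
    + apply mcomm_in_star_alg; [apply trunc_in | apply Acal_in_star_alg; auto].
    + apply normle_msub_sym. apply HJ. lia.
Qed.

Lemma dalpha_derivation {G : TopAbGroup} (x1 : G) alpha :
  c0seq alpha -> is_derivation (Acal x1) (Abig x1) (dalpha alpha).
Proof.
  intros Hc. split; [|split; [|split]].
  - intros a Ha. apply dalpha_in_Abig; auto.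
  - intros a b _ _. apply dcomm_add.
  - intros c a _. apply dcomm_scal.
  - intros a b Ha _. destruct (Acal_banded x1 a Ha) as [N [_ [Hb _]]].
    apply (dcomm_leibniz _ N); auto.
Qed.

(* calA is also the algebra generated, without adjoints, by U, U^* and the M_chi:
   the generating set is closed under adjoints (conj chi is a character). *)
Definition GenA {G : TopAbGroup} (x1 : G) : Mat -> Prop :=
  fun T => T = Ushift \/ T = madj Ushift \/ exists chi : G -> Cplx, character chi /\ T = Mf x1 chi.

Inductive alg_gen {G : TopAbGroup} (x1 : G) : Mat -> Prop :=
  | ag_gen : forall T, GenA x1 T -> alg_gen x1 T
  | ag_add : forall S T, alg_gen x1 S -> alg_gen x1 T -> alg_gen x1 (madd S T)
  | ag_scal : forall c T, alg_gen x1 T -> alg_gen x1 (mscal c T)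
  | ag_mul : forall S T, alg_gen x1 S -> alg_gen x1 T -> alg_gen x1 (mmul S T).

Lemma alg_gen_Acal {G : TopAbGroup} (x1 : G) T : alg_gen x1 T -> Acal x1 T.
Proof. induction 1; [apply sa_gen | apply sa_add | apply sa_scal | apply sa_mul]; auto. Qed.

Lemma character_conj {G : TopAbGroup} (chi : G -> Cplx) :
  character chi -> character (fun x => Cconj (chi x)).
Proof.
  intros [Hc [Ha Hm]]. split; [|split].
  - intros x eps He. destruct (Hc x eps He) as [U [HU [HUx HUy]]].
    exists U. split; auto. split; auto. intros y Hy.
    replace (Cminus (Cconj (chi y)) (Cconj (chi x))) with (Cconj (Cminus (chi y) (chi x)))
      by cring.
    rewrite Cabs_conj; auto.
  - intros x. rewrite Cabs_conj; auto.
  - intros x y. rewrite Hm. cring.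
Qed.

Lemma GenA_adj {G : TopAbGroup} (x1 : G) T : GenA x1 T -> GenA x1 (madj T).
Proof.
  intros [->|[->|[chi [Hchi ->]]]].
  - right; left; auto.
  - left. apply madj_madj.
  - right; right. exists (fun x => Cconj (chi x)). split; [apply character_conj; auto|].
    apply mat_ext; intros i k. unfold Mf, madj, diag.
    destruct (Nat.eqb_spec k i), (Nat.eqb_spec i k); subst; try lia; auto; cring.
Qed.

Lemma Acal_alg_gen {G : TopAbGroup} (x1 : G) T : Acal x1 T -> alg_gen x1 T /\ alg_gen x1 (madj T).
Proof.
  intros HA. induction HA as [T HT | S T HS [P1 Q1] HT [P2 Q2] | c T HT [P1 Q1]
                             | S T HS [P1 Q1] HT [P2 Q2] | T HT [P1 Q1]].
  - split; apply ag_gen; [|apply GenA_adj]; auto.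
  - split; [apply ag_add; auto|].
    replace (madj (madd S T)) with (madd (madj S) (madj T))
      by (apply mat_ext; intros i k; unfold madj, madd; cring).
    apply ag_add; auto.
  - split; [apply ag_scal; auto|].
    replace (madj (mscal c T)) with (mscal (Cconj c) (madj T))
      by (apply mat_ext; intros i k; unfold madj, mscal; cring).
    apply ag_scal; auto.
  - split; [apply ag_mul; auto|].
    destruct (Acal_banded x1 S HS) as [N [_ [B _]]].
    rewrite (madj_mmul N) by auto. apply ag_mul; auto.
  - rewrite madj_madj. split; auto.
Qed.

Lemma derivations_agree {G : TopAbGroup} (x1 : G) alpha d1 d2 :
  is_derivation (Acal x1) (Abig x1) d1 -> dalpha_conds x1 alpha d1 ->
  is_derivation (Acal x1) (Abig x1) d2 -> dalpha_conds x1 alpha d2 ->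
  forall T, Acal x1 T -> d1 T = d2 T.
Proof.
  intros [_ [A1 [S1 M1]]] [U1 [V1 Z1]] [_ [A2 [S2 M2]]] [U2 [V2 Z2]] T HT.
  destruct (Acal_alg_gen x1 T HT) as [Hgen _]. clear HT.
  induction Hgen as [T HT | S T HS IHS HT IHT | c T HT IHT | S T HS IHS HT IHT].
  - destruct HT as [->|[->|[chi [Hchi ->]]]]; [rewrite U1, U2 | rewrite V1, V2 |]; auto.
    assert (H0 : A0 x1 (Mf x1 chi)).
    { exists (fun _ => C0), chi. split; [exists 0%nat; auto|]. split; [apply cs_char; auto|].
      apply mat_ext; intros i k. unfold madd, diag. destruct (Nat.eqb i k); cring. }
    rewrite Z1, Z2; auto.
  - apply alg_gen_Acal in HS, HT. rewrite A1, A2, IHS, IHT; auto.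
  - apply alg_gen_Acal in HT. rewrite S1, S2, IHT; auto.
  - apply alg_gen_Acal in HS, HT. rewrite M1, M2, IHS, IHT; auto.
Qed.

Theorem lemma3p1 :
  forall (G : TopAbGroup) (x1 : G),
    compact_group G -> hausdorff G -> infinite_group G -> dense_cyclic x1 ->
    forall alpha : nat -> Cplx, c0seq alpha ->
      exists d : Mat -> Mat,
        (is_derivation (Acal x1) (Abig x1) d /\ dalpha_conds x1 alpha d /\
         approx_inner (Acal x1) (Abig x1) d /\ invariant (Acal x1) d) /\
        (forall d' : Mat -> Mat,
            is_derivation (Acal x1) (Abig x1) d' -> dalpha_conds x1 alpha d' ->
            forall a, Acal x1 a -> d' a = d a).
Proof.
  intros G x1 _ _ _ _ alpha Hc.
  assert (Hder := dalpha_derivation x1 alpha Hc).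
  assert (Hcond := dalpha_conditions x1 alpha).
  exists (dalpha alpha). split; [split; [|split; [|split]]|]; auto.
  - exists (trunc alpha). split; [intros j; apply trunc_in_Abig; auto|].
    intros a Ha. destruct (Acal_banded x1 a Ha) as [N [M [Hb He]]].
    apply (commutators_converge alpha N M); auto.
  - apply dcomm_invariant.
  - intros d' Hd' Hc'. apply (derivations_agree x1 alpha); auto.
Qed.
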